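(* Assume the superexponential regime $a_T/T\to\infty$, and let $\hat c_{\mathrm R}(x,\mathbb P,T)=\max_{i\in\Sigma}\ell(x,i)$ for all $x,\mathbb P,T$. Then $\hat c_{\mathrm R}\in\mathcal C$, it satisfies the out-of-sample guarantee with speed $(a_T)$ (indeed $\mathbb P^\infty(c(x,\mathbb P)>\hat c_{\mathrm R}(x,\hat{\mathbb P}_T,T))=0$ for all $T$), and for every $\hat c\in\mathcal C$ satisfying the out-of-sample guarantee with speed $(a_T)$ we have $\hat c_{\mathrm R}\preceq_{\mathcal C}\hat c$.
   Context: Setting: $\Sigma=\{1,\dots,d\}$ ($d\ge2$) is finite; $\mathcal P\subset\mathbb R^d$ is the probability simplex over $\Sigma$ and $\mathcal P^o$ its relative interior (all entries positive). $\mathcal X\subset\mathbb R^n$ is compact and $\ell:\mathcal X\times\Sigma\to\mathbb R$ is continuous in $x$ for each $i$. For $x\in\mathcal X$, $\mu\in\mathbb R^d$ let $c(x,\mu)=\sum_{i\in\Sigma}\ell(x,i)\mu(i)$. Data $\xi_1,\xi_2,\dots$ are i.i.d. with law $\mathbb P\in\mathcal P$, $\mathbb P^\infty$ denotes their joint law, and $\hat{\mathbb P}_T(i)=\frac1T\sum_{t=1}^T\mathbf 1\{\xi_t=i\}$. $(a_T)_{T\ge1}$ is a sequence of positive reals with $a_T\to\infty$. A predictor is a sequence $\hat c=(\hat c(\cdot,\cdot,T))_{T\in\mathbb N}$ of functions $\mathcal X\times\mathcal P\to\mathbb R$. It is regular, written $\hat c\in\mathcal C$, if (i) the sequence $(\hat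 c(\cdot,\cdot,T))_T$ is uniformly bounded and equicontinuous on $\mathcal X\times\mathcal P$, and (ii) each $\hat c(x,\cdot,T)$ is differentiable in $\mathbb P$ and the sequence of derivative maps $(x,\mathbb P)\mapsto\nabla_{\mathbb P}\hat c(x,\mathbb P,T)$ is uniformly bounded and equicontinuous. (A sequence $(f_T)$ is equicontinuous if for every point $y$ and $\varepsilon>0$ there is a neighbourhood $U$ of $y$ with $|f_T(y)-f_T(z)|<\varepsilon$ for all $z\in U$ and all $T$.) Out-of-sample guarantee with speed $(a_T)$: for all $x\in\mathcal X$ and $\mathbb P\in\mathcal P^o$, $\limsup_{T\to\infty}\frac1{a_T}\log\mathbb P^\infty\big(c(x,\mathbb P)>\hat c(x,\hat{\mathbb P}_T,T)\big)\le-1$. Order: $\hat c_1\preceq_{\mathcal C}\hat c_2$ iff for all $(x,\mathbb P)\in\mathcal X\times\mathcal P^o$, $\limsup_{T\to\infty}\frac{|\hat c_1(x,\mathbb P,T)-c(x,\mathbb P)|}{|\hat c_2(x,\mathbb P,T)-c(x,\mathbb P)|}\le1$, with the convention $0/0=1$. *)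

(* R : realType, vectors in R^k are row vectors 'rV[R]_k
   (with the library's max-norm), Sigma = 'I_d. *)
From HB Require Import structures.
From mathcomp Require Import all_boot all_order all_algebra.
From mathcomp Require Import all_classical all_reals all_analysis.
Set Implicit Arguments. Unset Strict Implicit. Unset Printing Implicit Defensive.
Import Order.TTheory GRing.Theory Num.Theory.
Import numFieldNormedType.Exports.
Local Open Scope classical_set_scope.
Local Open Scope ring_scope.

Section Defs.
Variables (R : realType) (n d : nat).

Definition simplex : set 'rV[R]_d :=
  [set P | (forall i, 0 <= P 0 i) /\ \sum_(i < d) P 0 i = 1].
Definition simplex_int : set 'rV[R]_d :=
  [set P | (forall i, 0 < P 0 i) /\ \sum_(i < d) P 0 i = 1].

Definition cost (ell : 'rV[R]_n -> 'I_d -> R) (x : 'rV[R]_n) (mu : 'rV[R]_d) : R :=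
  \sum_(i < d) ell x i * mu 0 i.

(* a predictor: (x, P, T) |-> hat c(x, P, T); only values on X x simplex matter *)
Definition predictor := 'rV[R]_n -> 'rV[R]_d -> nat -> R.

Definition unif_bounded {V : normedModType R} (X : set 'rV[R]_n)
  (f : 'rV[R]_n -> 'rV[R]_d -> nat -> V) : Prop :=
  exists M : R, forall T x P, X x -> simplex P -> `|f x P T| <= M.

Definition equicont {V : normedModType R} (X : set 'rV[R]_n)
  (f : 'rV[R]_n -> 'rV[R]_d -> nat -> V) : Prop :=
  forall x P, X x -> simplex P -> forall e : R, 0 < e ->
    exists2 del : R, 0 < del &
      forall y Q, X y -> simplex Q -> `|x - y| < del -> `|P - Q| < del ->
        forall T, `|f x P T - f y Q T| < e.

Definition grad_within (f : 'rV[R]_d -> R) (P g : 'rV[R]_d) : Prop :=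
  forall e : R, 0 < e -> exists2 del : R, 0 < del &
    forall Q, simplex Q -> `|Q - P| < del ->
      `|f Q - f P - \sum_(i < d) g 0 i * (Q 0 i - P 0 i)| <= e * `|Q - P|.

Definition regular (X : set 'rV[R]_n) (ch : predictor) : Prop :=
  [/\ unif_bounded X ch, equicont X ch &
      exists g : 'rV[R]_n -> 'rV[R]_d -> nat -> 'rV[R]_d,
        [/\ (forall T x P, X x -> simplex P ->
               grad_within (fun Q => ch x Q T) P (g x P T)),
            unif_bounded X g & equicont X g]].

Definition emp (T : nat) (s : {ffun 'I_T -> 'I_d}) : 'rV[R]_d :=
  \row_i ((#|[set t | s t == i]|)%:R / T%:R).

(* P^oo( hat P_T in E ): the event only depends on xi_1..xi_T, which are
   i.i.d. with law P, so its probability is the finite sum below *)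
Definition prob_iid (P : 'rV[R]_d) (T : nat) (E : 'rV[R]_d -> bool) : R :=
  \sum_(s : {ffun 'I_T -> 'I_d}) (\prod_(t < T) P 0 (s t)) * (E (emp s))%:R.

Definition elog (p : R) : \bar R := if p == 0 then (-oo)%E else (ln p)%:E.

Definition oos_guarantee (X : set 'rV[R]_n) (ell : 'rV[R]_n -> 'I_d -> R)
  (a : nat -> R) (ch : predictor) : Prop :=
  forall x P, X x -> simplex_int P ->
    (limn_esup (fun T => ((a T)^-1)%:E *
       elog (prob_iid P T (fun Ph => (cost ell x P > ch x Ph T)%R))) <= (-1)%:E)%E.

Definition eratio (u v : R) : \bar R :=
  if v == 0 then (if u == 0 then 1%E else +oo%E) else (u / v)%:E.

Definition preceq (X : set 'rV[R]_n) (ell : 'rV[R]_n -> 'I_d -> R)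
  (c1 c2 : predictor) : Prop :=
  forall x P, X x -> simplex_int P ->
    (limn_esup (fun T => eratio `|c1 x P T - cost ell x P|%R
                                `|c2 x P T - cost ell x P|%R) <= 1%:E)%E.

End Defs.

From HB Require Import structures.
From mathcomp Require Import all_boot all_order all_algebra.
From mathcomp Require Import all_classical all_reals all_analysis.
From mathcomp.algebra_tactics Require Import ring lra.
Import Order.TTheory GRing.Theory Num.Theory.
Import numFieldNormedType.Exports.
Local Open Scope classical_set_scope.
Local Open Scope ring_scope.
Set Implicit Arguments. Unset Strict Implicit. Unset Printing Implicit Defensive.

(* As
   c(x, P) is a convex combination of the losses, c(x, P) <= cR always, so cR
   never fails and trivially has the out-of-sample guarantee; it is regular
   since it is constant in (P, T) and continuous in x on the compact X.

   Tilt the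
   point mass at a maximising index towards the uniform law to get an interior
   law Q with c(x, Q) close to the maximum and all masses >= q > 0.  Every
   sample of length T has Q-probability >= q^T = exp(-O(T)) = exp(-o(a_T)), so
   the guarantee at Q forces ch(x, emp s, T) >= c(x, Q) for every sample s
   once T is large.  Empirical distributions are d/T-dense in the simplex, so
   equicontinuity of ch moves this bound to ch(x, P, T), and the error ratio
   |cR - c| / |ch - c| is eventually at most 1 + eps. *)

Lemma sup_range_attained (R : realType) d (f : 'I_d -> R) : (0 < d)%N ->
  exists2 i, sup (range f) = f i & forall j, f j <= f i.
Proof.
move=> d_gt0; have [i _ f_le] := @arg_maxP _ R _ (Ordinal d_gt0) xpredT f isT.
exists i => [|j]; last exact: f_le.
apply/eqP; rewrite eq_le; apply/andP; split.
- by apply: ge_sup => [|_ [j _ <-]]; [exists (f i), i | exact: f_le].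
- by apply: ub_le_sup; [exists (f i) => _ [j _ <-]; exact: f_le | exists i].
Qed.

Lemma sup_range_dist (R : realType) d (f g : 'I_d -> R) (e : R) : (0 < d)%N ->
  (forall i, `|f i - g i| < e) -> `|sup (range f) - sup (range g)| < e.
Proof.
move=> d_gt0 fg; have [i -> f_le] := sup_range_attained f d_gt0.
have [j -> g_le] := sup_range_attained g d_gt0.
move: (fg i) (fg j) (f_le j) (g_le i); rewrite !ltr_norml.
by move=> /andP[fgi_lo fgi_hi] /andP[fgj_lo fgj_hi] fj_le gi_le; apply/andP; split; lra.
Qed.

Lemma sup_range_norm_le (R : realType) d (f : 'I_d -> R) (M : R) : (0 < d)%N ->
  (forall i, `|f i| <= M) -> `|sup (range f)| <= M.
Proof. by move=> d_gt0 fM; have [i -> _] := sup_range_attained f d_gt0. Qed.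

Lemma cost_le_ub (R : realType) n d (ell : 'rV[R]_n -> 'I_d -> R) x P (m : R) :
  simplex P -> (forall j, ell x j <= m) -> cost ell x P <= m.
Proof.
move=> [P_ge0 P_sum1] ell_le; rewrite /cost.
apply: (@le_trans _ _ (\sum_j m * P 0 j)).
  by apply: ler_sum => j _; apply: ler_wpM2r.
by rewrite -mulr_sumr P_sum1 mulr1.
Qed.

Lemma within_continuous_family (R : realType) n d (X : set 'rV[R]_n)
  (f : 'rV[R]_n -> 'I_d -> R) x :
  (forall i, {within X, continuous (fun y => f y i)}) -> X x ->
  forall e, 0 < e -> exists2 del, 0 < del &
    forall y, X y -> `|x - y| < del -> forall i, `|f x i - f y i| < e.
Proof.
move=> f_cont Xx e e_gt0.
have : \forall y \near within X (nbhs x), forall i, `|f x i - f y i| < e.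
  apply: filter_forall => i.
  have := (@cvgrPdist_lt _ _ _ _ (nbhs_subspace_filter x) _ _).1 (f_cont i x).
  by move=> /(_ e e_gt0); rewrite -nbhs_subspace_in.
move=> /nbhs_ballP[del /= del_gt0 near_x]; exists del => // y Xy xy i.
by apply: near_x; rewrite // -ball_normE.
Qed.

Lemma compact_family_bounded (R : realType) n d (X : set 'rV[R]_n)
  (f : 'rV[R]_n -> 'I_d -> R) : compact X ->
  (forall i, {within X, continuous (fun y => f y i)}) ->
  exists M, forall i x, X x -> `|f x i| <= M.
Proof.
move=> X_compact f_cont.
have bound i : exists M, forall x, X x -> `|f x i| <= M.
  have [M0 [_ M0_bound]] :=
    compact_bounded (continuous_compact (f_cont i) X_compact).
  exists (M0 + 1) => x Xx.
  by apply: (M0_bound (M0 + 1)); [rewrite ltrDl | exists x].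
have [M M_bound] := boolp.choice bound.
exists (\sum_i `|M i|) => i x Xx.
apply: le_trans (M_bound i x Xx) _; apply: le_trans (ler_norm _) _.
by rewrite (bigD1 i) //= lerDl; exact: sumr_ge0.
Qed.

(* The robust predictor x |-> max_i ell(x, i) is regular: it is bounded and
   continuous on the compact X, and constant in (P, T) so its gradient is 0. *)
Lemma max_loss_regular (R : realType) n d (X : set 'rV[R]_n)
  (ell : 'rV[R]_n -> 'I_d -> R) : (0 < d)%N -> compact X ->
  (forall i, {within X, continuous (fun x => ell x i)}) ->
  regular X (fun x (P : 'rV[R]_d) (T : nat) => sup (range (ell x))).
Proof.
move=> d_gt0 X_compact ell_cont; split.
- have [M M_bound] := compact_family_bounded X_compact ell_cont.
  by exists M => T x P Xx _; apply: sup_range_norm_le => // i; exact: M_bound.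
- move=> x P Xx _ e e_gt0.
  have [del del_gt0 near_x] := within_continuous_family ell_cont Xx e_gt0.
  by exists del => // y Q Xy _ xy _ T; apply: sup_range_dist => // i; exact: near_x.
- exists (fun _ _ _ => 0); split.
  + move=> T x P _ _ e e_gt0; exists 1 => // Q _ _.
    rewrite subrr big1 => [|j _]; last by rewrite mxE mul0r.
    by rewrite subr0 normr0 mulr_ge0 // ltW.
  + by exists 0 => T x P _ _; rewrite normr0.
  + by move=> x P _ _ e e_gt0; exists 1 => // y Q _ _ _ _ T; rewrite subrr normr0.
Qed.

Lemma sample_with_counts d T (k : 'I_d -> nat) : (\sum_i k i)%N = T ->
  exists s : {ffun 'I_T -> 'I_d}, forall i, #|[set t | s t == i]| = k i.
Proof.
move=> sum_k.
pose L := flatten [seq nseq (k i) i | i <- enum 'I_d].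
have count_L i : count_mem i L = k i.
  rewrite count_flatten -map_comp sumnE big_map big_enum /=.
  rewrite (bigD1 i) //= big1 ?addn0 => [|j ji]; rewrite count_nseq /=.
    by case: eqP => [_|[]]; [rewrite mul1n|].
  by case: eqP => [ij|]; [move: ji; rewrite ij eq_refl | rewrite mul0n].
have size_L : size L == T.
  rewrite size_flatten /shape -map_comp sumnE big_map big_enum /= -sum_k.
  by apply/eqP/eq_bigr => i _; rewrite /= size_nseq.
pose tL := Tuple size_L.
exists [ffun t => tnth tL t] => i.
rewrite -count_L (_ : L = tL) // -[in RHS](map_tnth_enum tL) count_map cardE.
rewrite /enum_mem -enumT /= filter_predT size_filter; apply: eq_count => t.
by apply/idP/idP => [/set_mem|H]; [rewrite /= ffunE | apply/mem_set; rewrite /= ffunE].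
Qed.

(* Rounding T * P to integer counts summing to T: round every coordinate but
   one down, and give the remainder to the last one; each count is then off by
   at most d. *)
Lemma rounded_counts (R : realType) d (P : 'rV[R]_d) T : (0 < d)%N ->
  simplex P -> exists k : 'I_d -> nat,
    (\sum_i k i)%N = T /\ forall j, `|T%:R * P 0 j - (k j)%:R| <= d%:R.
Proof.
move=> d_gt0 [P_ge0 P_sum1]; pose i0 := Ordinal d_gt0.
pose r j := Num.trunc (T%:R * P 0 j).
have r_le j : (r j)%:R <= T%:R * P 0 j by rewrite truncn_le mulr_ge0.
have r_gt j : T%:R * P 0 j < (r j)%:R + 1 by rewrite natr1; exact: truncnS_gt.
have sum_TP : T%:R * P 0 i0 + \sum_(j | j != i0) T%:R * P 0 j = T%:R.
  by rewrite -[RHS]mulr1 -P_sum1 mulr_sumr [RHS](bigD1 i0).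
pose S := (\sum_(j | j != i0) r j)%N.
have S_R : S%:R = \sum_(j | j != i0) (r j)%:R :> R by rewrite natr_sum.
have sum_r : \sum_(j | j != i0) (r j)%:R <= \sum_(j | j != i0) T%:R * P 0 j :> R.
  by apply: ler_sum => j _.
have S_le : (S <= T)%N.
  by rewrite -(ler_nat R) S_R; move: (mulr_ge0 (ler0n R T) (P_ge0 i0)); lra.
exists (fun j => if j == i0 then (T - S)%N else r j); split.
  rewrite (bigD1 i0) //= (eq_bigr r) => [|j /negbTE ->] //.
  by rewrite subnK.
move=> j; case: eqP => [->|_].
  have defect : T%:R * P 0 i0 - (T - S)%:R
      = - \sum_(j | j != i0) (T%:R * P 0 j - (r j)%:R) :> R.
    by rewrite natrB // S_R sumrB; move: sum_TP; lra.
  rewrite defect normrN ger0_norm; last by apply: sumr_ge0 => l _; rewrite subr_ge0.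
  apply: (@le_trans _ _ (\sum_(j | j != i0) (1 : R))).
    by apply: ler_sum => l _; have := r_gt l; lra.
  rewrite -[X in _ <= X%:R]card_ord -sumr_const [X in _ <= X](bigD1 i0) //=.
  by rewrite lerDr.
rewrite ger0_norm ?subr_ge0 //; have := r_gt j; have : 1 <= d%:R :> R by rewrite ler1n.
lra.
Qed.

Lemma empirical_approx (R : realType) d (P : 'rV[R]_d) T : (0 < d)%N -> (0 < T)%N ->
  simplex P -> exists s : {ffun 'I_T -> 'I_d},
    simplex (emp R s) /\ `|P - emp R s| <= d%:R / T%:R.
Proof.
move=> d_gt0 T_gt0 P_simplex; have T_pos : 0 < T%:R :> R by rewrite ltr0n.
have [k [sum_k k_close]] := rounded_counts T d_gt0 P_simplex.
have [s s_counts] := sample_with_counts sum_k.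
have emp_s j : emp R s 0 j = (k j)%:R / T%:R by rewrite mxE s_counts.
exists s; split.
  split=> [j|]; first by rewrite emp_s divr_ge0.
  under eq_bigr do rewrite emp_s.
  by rewrite -mulr_suml -natr_sum sum_k divff // gt_eqF.
rewrite /Num.norm /= mx_normrE; apply: bigmax_le => [|[u j] _ /=].
  by rewrite divr_ge0.
rewrite (ord1 u) !mxE s_counts.
have -> : P 0 j - (k j)%:R / T%:R = (T%:R * P 0 j - (k j)%:R) / T%:R.
  by field; rewrite gt_eqF.
rewrite normrM [`|_^-1|]gtr0_norm ?invr_gt0 //.
by apply: ler_wpM2r; [rewrite invr_ge0 ltW | exact: k_close].
Qed.

Lemma prob_iid_ge_pow (R : realType) d (Q : 'rV[R]_d) (q : R) T
  (E : 'rV[R]_d -> bool) (s : {ffun 'I_T -> 'I_d}) :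
  0 <= q -> (forall i, q <= Q 0 i) -> E (emp R s) -> q ^+ T <= prob_iid Q T E.
Proof.
move=> q_ge0 Q_ge Es; rewrite /prob_iid (bigD1 s) //= Es mulr1.
apply: (@le_trans _ _ (\prod_(t < T) Q 0 (s t))); last first.
  rewrite lerDl; apply: sumr_ge0 => s' _; apply: mulr_ge0 => //.
  by apply: prodr_ge0 => t _; apply: le_trans (Q_ge _).
rewrite -[in X in X <= _](card_ord T) -prodr_const.
by apply: ler_prod => t _; rewrite q_ge0 Q_ge.
Qed.

Lemma prob_iid_dichotomy (R : realType) d (Q : 'rV[R]_d) (q : R) T
  (E : 'rV[R]_d -> bool) :
  0 <= q -> (forall i, q <= Q 0 i) -> prob_iid Q T E = 0 \/ q ^+ T <= prob_iid Q T E.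
Proof.
move=> q_ge0 Q_ge.
have [[s Es]|no_sample] :=
  boolp.pselect (exists s : {ffun 'I_T -> 'I_d}, E (emp R s)).
  by right; exact: prob_iid_ge_pow q_ge0 Q_ge Es.
left; rewrite /prob_iid big1 // => s _.
by case: (boolP (E (emp R s))) => [Es|_]; [case: no_sample; exists s | rewrite mulr0].
Qed.

Lemma limn_esup_lt_near (R : realType) (u : nat -> \bar R) (l m : \bar R) :
  (limn_esup u <= l)%E -> (l < m)%E -> \forall T \near \oo, (u T < m)%E.
Proof.
move=> u_le l_lt; have : (limn_esup u < m)%E by exact: le_lt_trans u_le l_lt.
rewrite /limn_esup /limf_esup => /ereal_inf_lt[_ [V FV <-]] V_lt.
apply: filterS FV => T VT; apply: le_lt_trans V_lt.
by apply: ereal_sup_ubound; exists T.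
Qed.

Lemma limn_esup_le_near (R : realType) (u : nat -> \bar R) (l : \bar R) :
  (\forall T \near \oo, (u T <= l)%E) -> (limn_esup u <= l)%E.
Proof.
move=> u_le; rewrite /limn_esup /limf_esup.
apply: (@le_trans _ _ (ereal_sup (u @` [set T | (u T <= l)%E]))).
  by apply: ereal_inf_lbound; exists [set T | (u T <= l)%E].
by apply: ge_ereal_sup => _ [T uT <-].
Qed.

Lemma limn_esup_le_eps (R : realType) (u : nat -> \bar R) (l : R) :
  (forall e, 0 < e -> \forall T \near \oo, (u T <= (l + e)%:E)%E) ->
  (limn_esup u <= l%:E)%E.
Proof.
move=> u_le; apply/lee_addgt0Pr => e e_gt0.
by apply: limn_esup_le_near; rewrite -EFinD; exact: u_le.
Qed.

Lemma superexp_decay_vanishes (R : realType) (a p : nat -> R) (q : R) :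
  (forall T, 0 < a T) -> (fun T => a T / T%:R) @ \oo --> +oo -> 0 < q ->
  (forall T, p T = 0 \/ q ^+ T <= p T) ->
  (limn_esup (fun T => ((a T)^-1)%:E * elog (p T)) <= (-1)%:E)%E ->
  \forall T \near \oo, p T = 0.
Proof.
move=> a_gt0 a_superlin q_gt0 p_dich p_decay.
have rate_lt := limn_esup_lt_near p_decay (ltac:(by rewrite lte_fin; lra) :
  ((-1)%:E < (-1/2)%:E)%E).
have a_big := (cvgryPgt _).1 a_superlin (2 * `|ln q|).
near=> T; have [//|p_ge] := p_dich T.
have p_gt0 : 0 < p T by apply: lt_le_trans p_ge; rewrite exprn_gt0.
have T_gt0 : 0 < T%:R :> R by rewrite ltr0n; near: T; exists 1%N.
have : (((a T)^-1)%:E * elog (p T) < (-1/2)%:E)%E by near: T.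
rewrite /elog gt_eqF // -EFinM lte_fin mulrC ltr_pdivrMr // => ln_p_lt.
have ln_p_ge : ln q * T%:R <= ln (p T).
  by rewrite mulr_natr -lnXn // ler_ln ?posrE ?exprn_gt0.
have : 2 * `|ln q| < a T / T%:R by near: T; exact: a_big.
rewrite ltr_pdivlMr // => aT_gt.
have : - `|ln q| * T%:R <= ln q * T%:R.
  by rewrite ler_wpM2r ?ler0n // lerNl ler_normr lexx orbT.
lra.
Unshelve. all: by end_near.
Qed.

Lemma guarantee_eventually_safe (R : realType) d (a : nat -> R) (Q : 'rV[R]_d)
  (q c : R) (f : 'rV[R]_d -> nat -> R) :
  (forall T, 0 < a T) -> (fun T => a T / T%:R) @ \oo --> +oo ->
  0 < q -> (forall j, q <= Q 0 j) ->
  (limn_esup (fun T => ((a T)^-1)%:E *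
     elog (prob_iid Q T (fun Ph => (c > f Ph T)%R))) <= (-1)%:E)%E ->
  \forall T \near \oo, forall s : {ffun 'I_T -> 'I_d}, c <= f (emp R s) T.
Proof.
move=> a_gt0 a_superlin q_gt0 Q_ge decay.
have := superexp_decay_vanishes a_gt0 a_superlin q_gt0
  (fun T => prob_iid_dichotomy T _ (ltW q_gt0) Q_ge) decay.
apply: filterS => T fail0 s; rewrite leNgt; apply/negP => fails.
have := prob_iid_ge_pow (E := fun Ph => (c > f Ph T)%R) (ltW q_gt0) Q_ge fails.
by rewrite fail0 leNgt exprn_gt0.
Qed.

(* Tilting a point mass at a maximising index i towards the uniform law gives
   an interior law Q, with masses bounded below, whose expected loss is within
   eta of the maximal loss. *)
Lemma tilted_interior_law (R : realType) n d (ell : 'rV[R]_n -> 'I_d -> R) x i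
  (eta : R) : (0 < d)%N -> (forall j, ell x j <= ell x i) -> 0 < eta ->
  exists Q : 'rV[R]_d, exists2 q, 0 < q &
    [/\ forall j, q <= Q 0 j, simplex_int Q & ell x i - eta < cost ell x Q].
Proof.
move=> d_gt0 i_max eta_gt0.
pose S := \sum_j (ell x i - ell x j).
have S_ge0 : 0 <= S by apply: sumr_ge0 => j _; rewrite subr_ge0.
pose t := eta / (1 + eta + S).
have t_gt0 : 0 < t by rewrite divr_gt0 //; lra.
have t_lt1 : t < 1 by rewrite ltr_pdivrMr; lra.
have tS_lt : t * S < eta.
  by rewrite mulrAC ltr_pdivrMr ?ltr_pM2l; lra.
have d_pos : 0 < d%:R :> R by rewrite ltr0n.
pose q := t / d%:R.
have q_gt0 : 0 < q by rewrite divr_gt0.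
have qd : q * d%:R = t by rewrite divfK // gt_eqF.
have q_le_t : q <= t by rewrite ler_pdivrMr // ler_pMr // ler1n.
pose Q : 'rV[R]_d := \row_j ((1 - t) * (j == i)%:R + q).
have Q_ge j : q <= Q 0 j by rewrite mxE lerDr mulr_ge0 // subr_ge0 ltW.
have sum_delta (w : 'I_d -> R) : \sum_j w j * (j == i)%:R = w i.
  by rewrite (bigD1 i) //= eqxx mulr1 big1 ?addr0 // => j /negbTE ->; rewrite mulr0.
exists Q; exists q => //; split => //.
  split=> [j|]; first exact: lt_le_trans q_gt0 (Q_ge j).
  under eq_bigr do rewrite mxE.
  rewrite big_split /= sumr_const card_ord -mulr_natr qd.
  by rewrite (sum_delta (fun=> 1 - t)) subrK.
have cost_Q : ell x i - cost ell x Q = q * S.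
  rewrite /cost; under eq_bigr do rewrite mxE mulrDr mulrA.
  rewrite big_split /= sum_delta -mulr_suml /S sumrB sumr_const card_ord.
  by rewrite -mulr_natl -qd; ring.
have : q * S <= t * S by rewrite ler_wpM2r.
lra.
Qed.

(* The
   guarantee at the tilted law Q forces ch(x, emp s, T) >= c(x, Q) for every
   sample s; choosing s with emp s close to P and using equicontinuity moves
   this to ch(x, P, T). *)
Lemma guarantee_near_max_loss (R : realType) n d (X : set 'rV[R]_n)
  (ell : 'rV[R]_n -> 'I_d -> R) (a : nat -> R) (ch : predictor R n d) x P i :
  (0 < d)%N -> (forall T, 0 < a T) -> (fun T => a T / T%:R) @ \oo --> +oo ->
  equicont X ch -> oos_guarantee X ell a ch -> X x -> simplex P ->
  (forall j, ell x j <= ell x i) -> forall eta, 0 < eta ->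
  \forall T \near \oo, ell x i - eta < ch x P T.
Proof.
move=> d_gt0 a_gt0 a_superlin ch_equi ch_oos Xx P_simplex i_max eta eta_gt0.
have [Q [q q_gt0 [Q_ge Q_int cost_Q]]] :=
  tilted_interior_law d_gt0 i_max (ltac:(lra) : 0 < eta / 2).
have safe := guarantee_eventually_safe a_gt0 a_superlin q_gt0 Q_ge
  (ch_oos x Q Xx Q_int).
have [del del_gt0 ch_close] := ch_equi x P Xx P_simplex (eta / 2) (ltac:(lra)).
have mesh_small : \forall T \near \oo, (0 < T)%N /\ d%:R / T%:R < del.
  exists (Num.trunc (d%:R / del)).+1 => // T /= N_le.
  have T_gt0 : (0 < T)%N := leq_trans (ltn0Sn _) N_le.
  split => //; rewrite ltr_pdivrMr ?ltr0n // mulrC -ltr_pdivrMr //.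
  by apply: lt_le_trans (truncnS_gt _) _; rewrite ler_nat.
near=> T; have [T_gt0 mesh_lt] : (0 < T)%N /\ d%:R / T%:R < del by near: T.
have safe_T : forall s : {ffun 'I_T -> 'I_d}, cost ell x Q <= ch x (emp R s) T.
  by near: T.
have [s [s_simplex s_close]] := empirical_approx d_gt0 T_gt0 P_simplex.
have := ch_close x (emp R s) Xx s_simplex (ltac:(by rewrite subrr normr0))
  (le_lt_trans s_close mesh_lt) T.
by have := safe_T s; rewrite ltr_norml; lra.
Unshelve. all: by end_near.
Qed.

Lemma eratio0_le1 (R : realType) (v : R) : (eratio 0 v <= 1%:E)%E.
Proof. by rewrite /eratio eqxx; case: ifP => _; rewrite ?mul0r lee_fin. Qed.

Lemma eratio_le (R : realType) (D v eps : R) : 0 < D -> 0 < eps ->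
  D / (1 + eps) < v -> (eratio D `|v| <= (1 + eps)%:E)%E.
Proof.
move=> D_gt0 eps_gt0 v_gt; have eps1_gt0 : 0 < 1 + eps by lra.
have v_gt0 : 0 < v by apply: lt_trans v_gt; rewrite divr_gt0.
rewrite /eratio gtr0_norm // gt_eqF // lee_fin ler_pdivrMr // mulrC.
by rewrite -ler_pdivrMr // ltW.
Qed.

(* The robust predictor never fails: c(x, P) never exceeds the maximal loss. *)
Lemma max_loss_never_fails (R : realType) n d (ell : 'rV[R]_n -> 'I_d -> R)
  x (P : 'rV[R]_d) T : (0 < d)%N -> simplex P ->
  prob_iid P T (fun Ph => cost ell x P > sup (range (ell x))) = 0.
Proof.
move=> d_gt0 P_simplex; have [i -> i_max] := sup_range_attained (ell x) d_gt0.
rewrite /prob_iid big1 // => s _.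
by rewrite ltNge cost_le_ub // mulr0.
Qed.

Lemma never_fails_guarantee (R : realType) n d (X : set 'rV[R]_n)
  (ell : 'rV[R]_n -> 'I_d -> R) (a : nat -> R) (ch : predictor R n d) :
  (forall T, 0 < a T) ->
  (forall x P T, X x -> simplex P ->
     prob_iid P T (fun Ph => cost ell x P > ch x Ph T) = 0) ->
  oos_guarantee X ell a ch.
Proof.
move=> a_gt0 never_fails x P Xx [P_gt0 P_sum1].
have P_simplex : simplex P by split => // j; exact: ltW.
apply: limn_esup_le_near; apply: nearW => T.
rewrite never_fails // /elog eqxx mulrNy gtr0_sg ?invr_gt0 // mul1e.
exact: leNye.
Qed.

Lemma max_loss_preceq (R : realType) n d (X : set 'rV[R]_n)
  (ell : 'rV[R]_n -> 'I_d -> R) (a : nat -> R) (ch : predictor R n d) :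
  (0 < d)%N -> (forall T, 0 < a T) -> (fun T => a T / T%:R) @ \oo --> +oo ->
  regular X ch -> oos_guarantee X ell a ch ->
  preceq X ell (fun x (P : 'rV[R]_d) (T : nat) => sup (range (ell x))) ch.
Proof.
move=> d_gt0 a_gt0 a_superlin [_ ch_equi _] ch_oos x P Xx [P_gt0 P_sum1].
have P_simplex : simplex P by split => // j; exact: ltW.
have [i -> i_max] := sup_range_attained (ell x) d_gt0.
apply: limn_esup_le_eps => eps eps_gt0.
have := cost_le_ub P_simplex i_max; rewrite -subr_ge0.
set D := ell x i - cost ell x P; rewrite le_eqVlt => /orP[/eqP D0|D_gt0].
  apply: nearW => T; rewrite -D0 normr0; apply: le_trans (eratio0_le1 _) _.
  by rewrite lee_fin; lra.
have eta_gt0 : 0 < D - D / (1 + eps).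
  by rewrite subr_gt0 ltr_pdivrMr; nra.
apply: filterS (guarantee_near_max_loss d_gt0 a_gt0 a_superlin ch_equi ch_oos
  Xx P_simplex i_max eta_gt0) => T ch_big.
by rewrite gtr0_norm //; apply: eratio_le => //; rewrite /D in ch_big *; lra.
Qed.

Theorem mainTheorem2 (R : realType) (n d : nat) (X : set 'rV[R]_n)
  (ell : 'rV[R]_n -> 'I_d -> R) (a : nat -> R) :
  (1 < d)%N ->
  compact X ->
  (forall i, {within X, continuous (fun x => ell x i)}) ->
  (forall T, 0 < a T) ->
  a @ \oo --> +oo ->
  (fun T => a T / T%:R) @ \oo --> +oo ->
  let cR : predictor R n d := fun x P T => sup (range (ell x)) in
  [/\ regular X cR,
      (forall x P T, X x -> simplex P ->
         prob_iid P T (fun Ph => cost ell x P > cR x Ph T) = 0),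
      oos_guarantee X ell a cR &
      forall ch : predictor R n d, regular X ch -> oos_guarantee X ell a ch ->
        preceq X ell cR ch].
Proof.
move=> d_gt1 X_compact ell_cont a_gt0 _ a_superlin cR.
have d_gt0 : (0 < d)%N by exact: ltnW.
have cR_never_fails x P T : X x -> simplex P ->
    prob_iid P T (fun Ph => cost ell x P > cR x Ph T) = 0.
  by move=> _; exact: max_loss_never_fails.
split => //.
- exact: max_loss_regular.
- exact: never_fails_guarantee.
- by move=> ch; exact: max_loss_preceq.
Qed.
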